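(* Let $A$ be a $*$-algebra with $*$-differential calculus $(\Omega,{\rm d},\wedge)$, let $\mathcal{S}$ be an $A$-bimodule, and let $\epsilon,\epsilon'\in\{1,-1\}$. Let $\mathcal{J}:\mathcal{S}\to\mathcal{S}$ be an antilinear map such that $\mathcal{J}(a.\phi)=\mathcal{J}(\phi).a^*$ and $\mathcal{J}(\phi.a)=a^*.\mathcal{J}(\phi)$ for all $a\in A,\phi\in\mathcal S$ (equivalently $j:\mathcal S\to\overline{\mathcal S}$, $j(\phi)=\overline{\mathcal J\phi}$, is a bimodule map) and $\mathcal{J}^2=\epsilon\,\mathrm{id}$. Let $(\nabla_{\mathcal{S}},\sigma_{\mathcal{S}})$ be a left bimodule connection on $\mathcal{S}$ with $\sigma_{\mathcal{S}}$ invertible, such that $(\mathrm{id}\otimes j)\nabla_{\mathcal{S}}=\nabla_{\overline{\mathcal{S}}}\circ j$, where $\nabla_{\overline{\mathcal S}}$ is the canonical left connection on $\overline{\mathcal S}$. Let $\triangleright:\Omega^1\otimes_A\mathcal{S}\to\mathcal{S}$ be an $A$-bimodule map such that $$\mathcal{J}(\xi\triangleright\phi)=\epsilon'\,\triangleright\big(\sigma_{\mathcal{S}}(\mathcal{J}\phi\otimes\xi^* )\big)\quad\text{for all }\xi\in\Omega^1,\ \phi\in\mathcal{S}$$ (in bimodule language $j\circ\triangleright=\epsilon'\,\overline{\triangleright\circ\sigma_{\mathcal S}}\,\Upsilon^{-1}(\star\otimes j)$). Put $D=\triangleright\circ\nabla_{\mathcal{S}}:\mathcal{S}\to\mathcal{S}$.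 Then: (a) $\mathcal J^2=\epsilon$; $a.(\mathcal{J}b\mathcal{J}^{-1}\phi)=\mathcal{J}b\mathcal{J}^{-1}(a.\phi)$ for all $a,b\in A$; $\mathcal{J}D=\epsilon' D\mathcal{J}$; and $[[D,a],\mathcal{J}b\mathcal{J}^{-1}]=0$ for all $a,b\in A$ (the algebraic conditions of an odd real spectral triple). (b) If moreover there is an $A$-bimodule map $\gamma:\mathcal{S}\to\mathcal{S}$ with $\gamma^2=\mathrm{id}$, $\nabla_{\mathcal{S}}\gamma=(\mathrm{id}\otimes\gamma)\nabla_{\mathcal{S}}$, $\gamma\circ\triangleright=-\triangleright\circ(\mathrm{id}\otimes\gamma)$ and $\mathcal{J}\gamma=\epsilon''\gamma\mathcal{J}$ for a sign $\epsilon''$, then in addition $\gamma$ commutes with the left action of $A$, $\mathcal J\gamma=\epsilon''\gamma\mathcal J$ and $D\gamma=-\gamma D$ (the algebraic conditions of an even real spectral triple).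
   Context: Elements of $A$ act on $\mathcal S$ by left multiplication and are identified with these operators; $[D,a]$ is the commutator. Left bimodule connection: a linear $\nabla_{\mathcal S}:\mathcal S\to\Omega^1\otimes_A\mathcal S$ with $\nabla_{\mathcal S}(a.\phi)={\rm d}a\otimes\phi+a.\nabla_{\mathcal S}\phi$, together with a bimodule map $\sigma_{\mathcal S}:\mathcal S\otimes_A\Omega^1\to\Omega^1\otimes_A\mathcal S$ with $\sigma_{\mathcal S}(\phi\otimes{\rm d}a)=\nabla_{\mathcal S}(\phi.a)-\nabla_{\mathcal S}(\phi).a$. Conjugate bimodule: for an $A$-bimodule $E$, $\overline E$ is the set $\{\overline e: e\in E\}$ with $\overline e+\overline f=\overline{e+f}$, $\lambda\overline e=\overline{\lambda^* e}$ ($\lambda\in\mathbb C$), $a.\overline e=\overline{e.a^*}$, $\overline e.a=\overline{a^*.e}$. For a bimodule map $\theta$, $\overline\theta(\overline e)=\overline{\theta(e)}$. $\Upsilon:\overline{E\otimes_AF}\to\overline F\otimes_A\overline E$, $\Upsilon(\overline{e\otimes f})=\overline f\otimes\overline e$. $\star:\Omega\to\overline\Omega$, $\star\xi=\overline{\xi^*}$. The canonical left connection on $\overline{\mathcal S}$ is $\nabla_{\overline{\mathcal S}}(\overline\phi)=(\star^{-1}\otimes\mathrm{id})\Upsilon\,\overline{\sigma_{\mathcal S}^{-1}\nabla_{\mathcal S}\phi}$. *)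

From HB Require Import structures.
From mathcomp Require Import all_boot all_order all_algebra.
Set Implicit Arguments. Unset Strict Implicit. Unset Printing Implicit Defensive.
Import Order.TTheory GRing.Theory Num.Theory.
Local Open Scope ring_scope.

Section Defs.
Variables (C : numClosedFieldType) (A : algType C).

Definition is_sign (e : C) : Prop := e = 1 \/ e = -1.

Definition additive_map (M N : zmodType) (f : M -> N) : Prop :=
  forall x y, f (x + y) = f x + f y.

Definition star_algebra (star : A -> A) : Prop :=
  (forall a b, star (a + b) = star a + star b) /\ (forall (c : C) a, star (c *: a) = c^* *: star a) /\ (forall a b, star (a * b) = star b * star a) /\ (forall a, star (star a) = a).

(* A complex A-bimodule: a Z-module with a left and a right action of A,
   bi-additive, associative, unital, commuting, and such that the left and
   right actions of scalars c%:A agree (this is the complex vector space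
   structure: c.m := c%:A . m). *)
Definition bimodule (M : zmodType) (l : A -> M -> M) (r : M -> A -> M) : Prop :=
  (((forall a m n, l a (m + n) = l a m + l a n)) /\ ((forall a b m, l (a + b) m = l a m + l b m)) /\ ((forall a b m, l (a * b) m = l a (l b m))) /\ ((forall m, l 1 m = m)) /\ ((forall a m n, r (m + n) a = r m a + r n a)) /\ ((forall a b m, r m (a + b) = r m a + r m b)) /\ ((forall a b m, r m (a * b) = r (r m a) b)) /\ ((forall m, r m 1 = m)) /\ ((forall a b m, r (l a m) b = l a (r m b))) /\ ((forall (c : C) m, l (c%:A) m = r m (c%:A)))).

Definition bimod_map (M : zmodType) (lM : A -> M -> M) (rM : M -> A -> M)
    (N : zmodType) (lN : A -> N -> N) (rN : N -> A -> N) (f : M -> N) : Prop :=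
  ((additive_map f) /\ ((forall a m, f (lM a m) = lN a (f m))) /\ ((forall a m, f (rM m a) = rN (f m) a))).

(* (T, lT, rT, tens) is the tensor product M (x)_A N of bimodules, given by
   the universal property of balanced biadditive maps. *)
Definition is_tensor (M : zmodType) (lM : A -> M -> M) (rM : M -> A -> M)
    (N : zmodType) (lN : A -> N -> N) (rN : N -> A -> N)
    (T : zmodType) (lT : A -> T -> T) (rT : T -> A -> T) (tens : M -> N -> T) : Prop :=
  ((bimodule lT rT) /\ ((forall m1 m2 n, tens (m1 + m2) n = tens m1 n + tens m2 n)) /\ ((forall m n1 n2, tens m (n1 + n2) = tens m n1 + tens m n2)) /\ ((forall m a n, tens (rM m a) n = tens m (lN a n))) /\ ((forall a m n, lT a (tens m n) = tens (lM a m) n)) /\ ((forall a m n, rT (tens m n) a = tens m (rN n a))) /\ ((forall (G : zmodType) (f : M -> N -> G),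
          (forall m1 m2 n, f (m1 + m2) n = f m1 n + f m2 n) ->
          (forall m n1 n2, f m (n1 + n2) = f m n1 + f m n2) ->
          (forall m a n, f (rM m a) n = f m (lN a n)) ->
          exists g : T -> G, additive_map g /\ forall m n, g (tens m n) = f m n)) /\ ((forall (G : zmodType) (g1 g2 : T -> G), additive_map g1 -> additive_map g2 ->
          (forall m n, g1 (tens m n) = g2 (tens m n)) -> forall t, g1 t = g2 t))).

(* Conjugate bimodule structure on the same carrier: a.(bar m) = bar(m.a^* ),
   (bar m).a = bar(a^* .m); the carrier element m represents bar m. *)
Definition conj_l (star : A -> A) (M : zmodType) (r : M -> A -> M) : A -> M -> M :=
  fun a m => r m (star a).
Definition conj_r (star : A -> A) (M : zmodType) (l : A -> M -> M) : M -> A -> M :=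
  fun m a => l (star a) m.

(* First order part of a *-differential calculus: Omega^1 bimodule, d : A -> Omega^1
   linear with Leibniz rule, Omega^1 spanned by a.db, and a * on Omega^1
   compatible with d and the bimodule structure, involutive. *)
Definition star_calculus1 (star : A -> A)
    (O : zmodType) (lO : A -> O -> O) (rO : O -> A -> O) (d : A -> O) (starO : O -> O) : Prop :=
  ((bimodule lO rO) /\ ((forall a b, d (a + b) = d a + d b)) /\ ((forall (c : C) a, d (c *: a) = lO (c%:A) (d a))) /\ ((forall a b, d (a * b) = rO (d a) b + lO a (d b))) /\ ((forall xi : O, exists s : seq (A * A), xi = \sum_(p <- s) lO p.1 (d p.2))) /\ (additive_map starO) /\ ((forall a xi, starO (lO a xi) = rO (starO xi) (star a))) /\ ((forall a xi, starO (rO xi a) = lO (star a) (starO xi))) /\ ((forall xi, starO (starO xi) = xi)) /\ ((forall a, starO (d a) = d (star a)))).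

Definition left_bimod_connection
    (O : zmodType) (lO : A -> O -> O) (rO : O -> A -> O) (d : A -> O)
    (S : zmodType) (lS : A -> S -> S) (rS : S -> A -> S)
    (T1 : zmodType) (l1 : A -> T1 -> T1) (r1 : T1 -> A -> T1) (tens1 : O -> S -> T1)
    (T2 : zmodType) (l2 : A -> T2 -> T2) (r2 : T2 -> A -> T2) (tens2 : S -> O -> T2)
    (nabla : S -> T1) (sigma : T2 -> T1) : Prop :=
  ((additive_map nabla) /\ ((forall (c : C) phi, nabla (lS (c%:A) phi) = l1 (c%:A) (nabla phi))) /\ ((forall a phi, nabla (lS a phi) = tens1 (d a) phi + l1 a (nabla phi))) /\ (bimod_map l2 r2 l1 r1 sigma) /\ ((forall phi a, sigma (tens2 phi (d a)) = nabla (rS phi a) - r1 (nabla phi) a))).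

End Defs.

(* The real structure J intertwines D = tr o nabla with itself because every
   ingredient of D is compatible with J: nabla by the hypothesis relating it
   to the conjugate connection, and tr by its J-compatibility, which after
   unwinding the swap (phi (x) xi |-> xi^* (x) bar phi) says that
   J o tr = eps' . tr o sigma o Psi^-1 o (id (x) j).  The first-order
   condition holds since [D, a] = tr (da (x) -) is a right module map, while
   J b J^-1 is the right action of b^*.  The grading statements follow by
   lifting id (x) gamma to the tensor product. *)
From HB Require Import structures.
From mathcomp Require Import all_boot all_order all_algebra.
Set Implicit Arguments. Unset Strict Implicit. Unset Printing Implicit Defensive.
Import Order.TTheory GRing.Theory Num.Theory.
Local Open Scope ring_scope.

Section TensorProduct.
Variables (C : numClosedFieldType) (A : algType C).
Variables (M : zmodType) (lM : A -> M -> M) (rM : M -> A -> M).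
Variables (N : zmodType) (lN : A -> N -> N) (rN : N -> A -> N).
Variables (T : zmodType) (lT : A -> T -> T) (rT : T -> A -> T) (tens : M -> N -> T).
Hypothesis tensorT : is_tensor lM rM lN rN lT rT tens.

Lemma tensor_lift (G : zmodType) (f : M -> N -> G) :
  (forall m1 m2 n, f (m1 + m2) n = f m1 n + f m2 n) ->
  (forall m n1 n2, f m (n1 + n2) = f m n1 + f m n2) ->
  (forall m a n, f (rM m a) n = f m (lN a n)) ->
  exists g : T -> G, additive_map g /\ forall m n, g (tens m n) = f m n.
Proof. by case: tensorT => _ [_ [_ [_ [_ [_ [lift _]]]]]]; apply: lift. Qed.

Lemma tensor_ext (G : zmodType) (g1 g2 : T -> G) :
  additive_map g1 -> additive_map g2 ->
  (forall m n, g1 (tens m n) = g2 (tens m n)) -> forall t, g1 t = g2 t.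
Proof. by case: tensorT => _ [_ [_ [_ [_ [_ [_ ext]]]]]]; apply: ext. Qed.

Lemma tensor_rmul m n a : rT (tens m n) a = tens m (rN n a).
Proof. by case: tensorT => _ [_ [_ [_ [_ [tr _]]]]]. Qed.

Lemma tensor_id_map (N' : zmodType) (lN' : A -> N' -> N') (rN' : N' -> A -> N')
    (T' : zmodType) (lT' : A -> T' -> T') (rT' : T' -> A -> T') (tens' : M -> N' -> T')
    (f : N -> N') :
  is_tensor lM rM lN' rN' lT' rT' tens' ->
  additive_map f -> (forall a n, f (lN a n) = lN' a (f n)) ->
  exists g : T -> T', additive_map g /\ forall m n, g (tens m n) = tens' m (f n).
Proof.
case=> _ [addl' [addr' [bal' _]]] fadd fl.
apply: tensor_lift => [m1 m2 n|m n1 n2|m a n].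
- exact: addl'.
- by rewrite fadd addr'.
- by rewrite fl bal'.
Qed.

End TensorProduct.

Section RealStructure.
Variables (C : numClosedFieldType) (A : algType C) (star : A -> A).
Variables (S : zmodType) (lS : A -> S -> S) (rS : S -> A -> S) (J Ji : S -> S).
Hypothesis J_lmul : forall a phi, J (lS a phi) = rS (J phi) (star a).
Hypothesis JiK : cancel Ji J.

Lemma J_conj_lmul b psi : J (lS b (Ji psi)) = rS psi (star b).
Proof. by rewrite J_lmul JiK. Qed.

Lemma lmul_commutes_J_conj_lmul (lrS : forall a b m, rS (lS a m) b = lS a (rS m b))
    a b phi :
  lS a (J (lS b (Ji phi))) = J (lS b (Ji (lS a phi))).
Proof. by rewrite !J_conj_lmul lrS. Qed.

End RealStructure.

Section DiracOperator.
Variables (C : numClosedFieldType) (A : algType C) (star : A -> A).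
Variables (O : zmodType) (lO : A -> O -> O) (rO : O -> A -> O) (d : A -> O) (starO : O -> O).
Variables (S : zmodType) (lS : A -> S -> S) (rS : S -> A -> S).
Variables (T1 : zmodType) (l1 : A -> T1 -> T1) (r1 : T1 -> A -> T1) (tens1 : O -> S -> T1).
Variables (T2 : zmodType) (l2 : A -> T2 -> T2) (r2 : T2 -> A -> T2) (tens2 : S -> O -> T2).
Variables (T3 : zmodType) (l3 : A -> T3 -> T3) (r3 : T3 -> A -> T3) (tens3 : O -> S -> T3).
Variables (nabla : S -> T1) (sigma : T2 -> T1) (tr : T1 -> S).
Hypothesis tensorT1 : is_tensor lO rO lS rS l1 r1 tens1.
Hypothesis tensorT2 : is_tensor lS rS lO rO l2 r2 tens2.
Hypothesis tensorT3 : is_tensor lO rO (conj_l star rS) (conj_r star lS) l3 r3 tens3.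
Hypothesis connection :
  left_bimod_connection lO rO d lS rS l1 r1 tens1 l2 r2 tens2 nabla sigma.
Hypothesis tr_bimod : bimod_map l1 r1 lS rS tr.

Definition Dirac phi := tr (nabla phi).
Local Notation D := Dirac.

Lemma Dirac_commutator a psi : D (lS a psi) - lS a (D psi) = tr (tens1 (d a) psi).
Proof.
case: connection => _ [_ [nabla_lmul _]]; case: tr_bimod => tr_add [tr_lmul _].
by rewrite /D nabla_lmul tr_add tr_lmul addrK.
Qed.

Lemma Dirac_first_order a b psi :
  D (lS a (rS psi b)) - lS a (D (rS psi b)) - rS (D (lS a psi) - lS a (D psi)) b = 0.
Proof.
case: tr_bimod => _ [_ tr_rmul].
by rewrite !Dirac_commutator -(tensor_rmul tensorT1) tr_rmul subrr.
Qed.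

Section Grading.
Variable gamma : S -> S.
Hypothesis gamma_bimod : bimod_map lS rS lS rS gamma.
Hypothesis gamma_parity : forall idg : T1 -> T1, additive_map idg ->
  (forall xi phi, idg (tens1 xi phi) = tens1 xi (gamma phi)) ->
  (forall phi, nabla (gamma phi) = idg (nabla phi)) /\
  (forall t, gamma (tr t) = - tr (idg t)).

Lemma Dirac_anticommutes_grading phi : D (gamma phi) = - gamma (D phi).
Proof.
case: gamma_bimod => gamma_add [gamma_lmul _].
have [idg [idg_add idgE]] := tensor_id_map tensorT1 tensorT1 gamma_add gamma_lmul.
have [nabla_gamma tr_gamma] := gamma_parity idg_add idgE.
by rewrite /D nabla_gamma tr_gamma opprK.
Qed.

End Grading.

Section Reality.
Variables (eps' : C) (J : S -> S).
Hypothesis star_inv : forall a, star (star a) = a.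
Hypothesis calculus : star_calculus1 star lO rO d starO.
Hypothesis bimoduleS : bimodule lS rS.
Hypothesis J_add : additive_map J.
Hypothesis J_lmul : forall a phi, J (lS a phi) = rS (J phi) (star a).
Hypothesis sigma_bij : bijective sigma.
Hypothesis nabla_J : forall (idj : T1 -> T3) (Psi : T2 -> T3),
  additive_map idj -> additive_map Psi ->
  (forall xi phi, idj (tens1 xi phi) = tens3 xi (J phi)) ->
  (forall phi xi, Psi (tens2 phi xi) = tens3 (starO xi) phi) ->
  forall psi t, sigma t = nabla (J psi) -> idj (nabla psi) = Psi t.
Hypothesis tr_J : forall xi phi,
  J (tr (tens1 xi phi)) = lS (eps'%:A) (tr (sigma (tens2 (J phi) (starO xi)))).

(* The swap bar(phi (x) xi) |-> xi^* (x) bar phi, i.e. (star^-1 (x) id) o Upsilon. *)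
Lemma swap_star_exists : exists Psi : T2 -> T3,
  additive_map Psi /\ forall phi xi, Psi (tens2 phi xi) = tens3 (starO xi) phi.
Proof.
case: calculus => _ [_ [_ [_ [_ [starO_add [starO_lmul _]]]]]].
case: tensorT3 => _ [addl3 [addr3 [bal3 _]]].
apply: (tensor_lift tensorT2) => [m1 m2 n|m n1 n2|m a n].
- exact: addr3.
- by rewrite starO_add addl3.
- by rewrite starO_lmul bal3 /conj_l star_inv.
Qed.

Lemma swap_tr_exists : exists h : T3 -> S,
  additive_map h /\ forall xi phi, h (tens3 xi phi) = tr (sigma (tens2 phi (starO xi))).
Proof.
case: calculus => _ [_ [_ [_ [_ [starO_add [_ [starO_rmul _]]]]]]].
case: tensorT2 => _ [addl2 [addr2 [bal2 _]]].
case: connection => _ [_ [_ [[sigma_add _] _]]]; case: tr_bimod => tr_add _.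
apply: (tensor_lift tensorT3) => [m1 m2 n|m n1 n2|m a n].
- by rewrite starO_add addr2 sigma_add tr_add.
- by rewrite addl2 sigma_add tr_add.
- by rewrite starO_rmul /conj_l bal2.
Qed.

Lemma J_Dirac phi : J (D phi) = lS (eps'%:A) (D (J phi)).
Proof.
case: calculus => _ [_ [_ [_ [_ [_ [_ [_ [starO_inv _]]]]]]]].
case: connection => _ [_ [_ [[sigma_add _] _]]]; case: tr_bimod => tr_add _.
case: bimoduleS => lS_add _.
have [idj [idj_add idjE]] := tensor_id_map tensorT1 tensorT3 J_add J_lmul.
have [Psi [Psi_add PsiE]] := swap_star_exists.
have [h [h_add hE]] := swap_tr_exists.
have J_tr : forall x, J (tr x) = lS (eps'%:A) (h (idj x)).
  apply: (tensor_ext tensorT1 (g1 := J \o tr)) => [x1 x2|x1 x2|xi psi] /=.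
  - by rewrite tr_add J_add.
  - by rewrite idj_add h_add lS_add.
  - by rewrite tr_J idjE hE.
have h_Psi : forall t, h (Psi t) = tr (sigma t).
  apply: (tensor_ext tensorT2 (g1 := h \o Psi)) => [t1 t2|t1 t2|psi xi] /=.
  - by rewrite Psi_add h_add.
  - by rewrite sigma_add tr_add.
  - by rewrite PsiE hE starO_inv.
case: sigma_bij => sigma_inv _ sigmaK.
by rewrite /D J_tr (nabla_J idj_add Psi_add idjE PsiE (sigmaK _)) h_Psi sigmaK.
Qed.

End Reality.
End DiracOperator.

Theorem mainTheorem4
  (C : numClosedFieldType) (A : algType C) (star : A -> A)
  (O : zmodType) (lO : A -> O -> O) (rO : O -> A -> O) (d : A -> O) (starO : O -> O)
  (S : zmodType) (lS : A -> S -> S) (rS : S -> A -> S)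
  (T1 : zmodType) (l1 : A -> T1 -> T1) (r1 : T1 -> A -> T1) (tens1 : O -> S -> T1)
  (T2 : zmodType) (l2 : A -> T2 -> T2) (r2 : T2 -> A -> T2) (tens2 : S -> O -> T2)
  (T3 : zmodType) (l3 : A -> T3 -> T3) (r3 : T3 -> A -> T3) (tens3 : O -> S -> T3)
  (eps eps' : C) (J : S -> S) (nabla : S -> T1) (sigma : T2 -> T1) (tr : T1 -> S) :
  star_algebra star ->
  star_calculus1 star lO rO d starO ->
  bimodule lS rS ->
  is_tensor lO rO lS rS l1 r1 tens1 ->
  is_tensor lS rS lO rO l2 r2 tens2 ->
  is_tensor lO rO (conj_l star rS) (conj_r star lS) l3 r3 tens3 ->
  is_sign eps -> is_sign eps' ->
  additive_map J ->
  (forall a phi, J (lS a phi) = rS (J phi) (star a)) ->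
  (forall a phi, J (rS phi a) = lS (star a) (J phi)) ->
  (forall phi, J (J phi) = lS (eps%:A) phi) ->
  left_bimod_connection lO rO d lS rS l1 r1 tens1 l2 r2 tens2 nabla sigma ->
  bijective sigma ->
  (forall (idj : T1 -> T3) (Psi : T2 -> T3),
      additive_map idj -> additive_map Psi ->
      (forall xi phi, idj (tens1 xi phi) = tens3 xi (J phi)) ->
      (forall phi xi, Psi (tens2 phi xi) = tens3 (starO xi) phi) ->
      forall psi t, sigma t = nabla (J psi) -> idj (nabla psi) = Psi t) ->
  bimod_map l1 r1 lS rS tr ->
  (forall xi phi, J (tr (tens1 xi phi))
                  = lS (eps'%:A) (tr (sigma (tens2 (J phi) (starO xi))))) ->
  let D := fun phi => tr (nabla phi) in
  ((forall phi, J (J phi) = lS (eps%:A) phi) /\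
   (forall Ji : S -> S, cancel J Ji -> cancel Ji J ->
      ((forall a b phi, lS a (J (lS b (Ji phi))) = J (lS b (Ji (lS a phi)))) /\
          (forall phi, J (D phi) = lS (eps'%:A) (D (J phi)))
        /\ (forall a b phi,
             let Da := fun psi => D (lS a psi) - lS a (D psi) in
             let Jb := fun psi => J (lS b (Ji psi)) in
             Da (Jb phi) - Jb (Da phi) = 0)))) /\
  (forall (gamma : S -> S) (eps'' : C),
     is_sign eps'' ->
     bimod_map lS rS lS rS gamma ->
     (forall phi, gamma (gamma phi) = phi) ->
     (forall idg : T1 -> T1, additive_map idg ->
        (forall xi phi, idg (tens1 xi phi) = tens1 xi (gamma phi)) ->
        (forall phi, nabla (gamma phi) = idg (nabla phi)) /\
        (forall t, gamma (tr t) = - tr (idg t))) ->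
     (forall phi, J (gamma phi) = lS (eps''%:A) (gamma (J phi))) ->
     ((forall a phi, gamma (lS a phi) = lS a (gamma phi)) /\
         (forall phi, J (gamma phi) = lS (eps''%:A) (gamma (J phi))) /\
         (forall phi, D (gamma phi) = - gamma (D phi)))).
Proof.
move=> [_ [_ [_ star_inv]]] calculus bimoduleS
  tensorT1 tensorT2 tensorT3 _ _ J_add J_lmul _ JJ connection sigma_bij nabla_J
  tr_bimod tr_J D; rewrite {}/D.
split; [split=> // Ji _ JiK; split; [|split]|].
- case: bimoduleS => _ [_ [_ [_ [_ [_ [_ [_ [lrS _]]]]]]]].
  exact: lmul_commutes_J_conj_lmul J_lmul JiK lrS.
- exact: (J_Dirac tensorT1 tensorT2 tensorT3 connection tr_bimod star_inv calculus
    bimoduleS J_add J_lmul sigma_bij nabla_J tr_J).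
- move=> a b phi; rewrite !(J_conj_lmul J_lmul JiK).
  exact: (Dirac_first_order tensorT1 connection tr_bimod a (star b) phi).
- move=> gamma eps'' _ gamma_bimod _ gamma_parity J_gamma.
  split; first by case: gamma_bimod => _ [].
  split=> // phi.
  exact: (Dirac_anticommutes_grading tensorT1 gamma_bimod gamma_parity phi).
Qed.
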